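(* The recognizable subsets of the additive monoid $(\mathbb{Q}_{\ge 0}, +, 0)$ of non-negative rationals are exactly $\emptyset$, $\{0\}$, $\mathbb{Q}_{>0}$ and $\mathbb{Q}_{\ge 0}$.
   Context: A subset $S$ of a monoid $M$ is recognizable if there exist a finite monoid $N$, a monoid morphism $\varphi\colon M \to N$ and a subset $T \subseteq N$ with $S = \varphi^{-1}(T)$. *)

From mathcomp Require Import all_boot all_order all_algebra.
Set Implicit Arguments. Unset Strict Implicit. Unset Printing Implicit Defensive.
Import Order.TTheory GRing.Theory Num.Theory.
Local Open Scope ring_scope.

Definition is_monoid (M : Type) (op : M -> M -> M) (e : M) : Prop :=
  associative op /\ left_id e op /\ right_id e op.

Definition is_monoid_morphism (M N : Type) (opM : M -> M -> M) (eM : M)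
  (opN : N -> N -> N) (eN : N) (f : M -> N) : Prop :=
  f eM = eN /\ forall x y, f (opM x y) = opN (f x) (f y).

Definition recognizable (M : Type) (opM : M -> M -> M) (eM : M)
  (S : M -> Prop) : Prop :=
  exists (N : finType) (opN : N -> N -> N) (eN : N) (phi : M -> N) (T : {set N}),
    is_monoid opN eN /\ is_monoid_morphism opM eM opN eN phi /\
    forall x, S x <-> phi x \in T.

Definition Qnn := {q : rat | 0 <= q}.

Definition Qnn0 : Qnn := exist _ 0 (lexx 0).

Definition Qnn_add (x y : Qnn) : Qnn :=
  exist _ (proj1_sig x + proj1_sig y) (addr_ge0 (proj2_sig x) (proj2_sig y)).

From mathcomp Require Import all_boot all_order all_algebra.
Set Implicit Arguments. Unset Strict Implicit. Unset Printing Implicit Defensive.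
Import Order.TTheory GRing.Theory Num.Theory.
Local Open Scope ring_scope.

(* A morphism phi from (Q>=0, +) to a finite monoid N maps every x > 0 to an
   idempotent: x = n! (x / n!) for n = |N|, and a^(n!) is idempotent for every
   a in N, because n! is a multiple of the period of the powers of a and lies
   beyond their preperiod. Writing b x = a with positive integers a and b then
   gives phi x = phi (b x) = phi a = phi 1, so phi only detects whether x = 0;
   conversely, x |-> (x != 0) into the monoid (bool, ||) recognizes each of the
   four sets. *)

Definition mpow (N : Type) (op : N -> N -> N) (e a : N) (n : nat) : N :=
  iter n (op a) e.

Section FiniteMonoidPowers.
Variables (N : finType) (op : N -> N -> N) (e : N).
Hypothesis N_monoid : is_monoid op e.

Local Notation pow := (mpow op e).

Lemma mpowS (a : N) (n : nat) : pow a n.+1 = op a (pow a n).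
Proof. by []. Qed.

Lemma mpowD (a : N) (m n : nat) : pow a (m + n) = op (pow a m) (pow a n).
Proof.
have [opA [op1 _]] := N_monoid.
by elim: m => [|m IHm]; rewrite ?op1 // addSn !mpowS IHm opA.
Qed.

Lemma mpow_idem (a : N) (k : nat) : op a a = a -> pow a k.+1 = a.
Proof.
have [_ [_ opr1]] := N_monoid.
by move=> aa; elim: k => [|k IHk]; rewrite mpowS ?IHk.
Qed.

Lemma mpow_pigeonhole (a : N) :
  exists i j : nat, [/\ (i < j)%N, (j <= #|N|)%N & pow a i = pow a j].
Proof.
pose f (k : 'I_#|N|.+1) := pow a k.
have /injectivePn[i [j neq_ij eq_f]] : ~~ injectiveb f.
  by apply/injectiveP => /leq_card; rewrite card_ord ltnn.
have le_N (k : 'I_#|N|.+1) : (k <= #|N|)%N by rewrite -ltnS.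
case: (ltngtP i j) => [lt_ij|lt_ji|/val_inj eq_ij]; last by rewrite eq_ij eqxx in neq_ij.
- by exists i, j.
- by exists j, i.
Qed.

Lemma mpow_periodic (a : N) (i p : nat) :
  pow a (i + p) = pow a i -> forall m c, (i <= m)%N -> pow a (m + c * p) = pow a m.
Proof.
move=> per m c le_im; rewrite -(subnK le_im) -addnA !(mpowD _ (m - i)); congr op.
elim: c => [|c IHc]; first by rewrite addn0.
by rewrite mulSn addnA mpowD per -mpowD.
Qed.

Lemma mpow_fact_idem (a : N) :
  op (pow a #|N|`!) (pow a #|N|`!) = pow a #|N|`!.
Proof.
have [i [j [lt_ij le_jN eq_ij]]] := mpow_pigeonhole a.
have per : pow a (i + (j - i)) = pow a i by rewrite subnKC ?eq_ij // ltnW.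
have dvd_fact : (j - i %| #|N|`!)%N.
  by apply: dvdn_fact; rewrite subn_gt0 lt_ij (leq_trans (leq_subr _ _)).
have le_fact : (i <= #|N|`!)%N.
  exact: leq_trans (ltnW (leq_trans lt_ij le_jN)) (fact_geq _).
by rewrite -mpowD -{2}(divnK dvd_fact) (mpow_periodic per).
Qed.

End FiniteMonoidPowers.

Lemma pos_rat_mulrn_nat (x : rat) :
  0 < x -> exists a b : nat, [/\ (0 < a)%N, (0 < b)%N & x *+ b = a%:R].
Proof.
move=> x_gt0; exists `|numq x|%N, `|denq x|%N; split.
- by rewrite absz_gt0 numq_eq0 gt_eqF.
- by rewrite absz_gt0 denq_neq0.
- by rewrite -[LHS]mulr_natr !natr_absz !ger0_norm ?denq_ge0 ?numq_ge0 ?ltW // numqE.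
Qed.

Section MorphismOnNonnegRat.
Variables (N : finType) (op : N -> N -> N) (e : N) (f : rat -> N).
Hypotheses (N_monoid : is_monoid op e) (f0 : f 0 = e).
Hypothesis fD : forall q r, 0 <= q -> 0 <= r -> f (q + r) = op (f q) (f r).

Lemma fMn (x : rat) (n : nat) : 0 <= x -> f (x *+ n) = mpow op e (f x) n.
Proof.
move=> x_ge0; elim: n => [|n IHn] //.
by rewrite mulrS fD ?mulrn_wge0 // IHn.
Qed.

Lemma f_pos_idem (x : rat) : 0 < x -> op (f x) (f x) = f x.
Proof.
move=> x_gt0; pose m := #|N|`!.
have m_neq0 : m%:R != 0 :> rat by rewrite pnatr_eq0 -lt0n fact_gt0.
have -> : x = (x / m%:R) *+ m by rewrite -mulr_natr divfK.
by rewrite fMn ?divr_ge0 ?ler0n ?ltW //; exact: mpow_fact_idem.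
Qed.

Lemma f_pos_const (x : rat) : 0 < x -> f x = f 1.
Proof.
move=> x_gt0; have [[|a] [[|b] [//= _ _ xb_a]]] := pos_rat_mulrn_nat x_gt0.
rewrite -(mpow_idem N_monoid b (f_pos_idem x_gt0)) -fMn ?ltW // xb_a.
by rewrite -[a.+1%:R]/(1 *+ a.+1) fMn // mpow_idem // f_pos_idem.
Qed.

End MorphismOnNonnegRat.

Lemma Qnn_gt0 (x : Qnn) : (0 < sval x) = (sval x != 0).
Proof. by rewrite lt_def (proj2_sig x) andbT. Qed.

Lemma recognizable_sign_preim (S : Qnn -> Prop) :
  recognizable Qnn_add Qnn0 S ->
  exists T : {set bool}, forall x, S x <-> (sval x != 0) \in T.
Proof.
move=> [N [op [e [phi [T [N_monoid [[phi0 phiD] S_T]]]]]]].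
pose f (q : rat) := phi (insubd Qnn0 q).
have phi_f x : phi x = f (sval x) by rewrite /f valKd.
have fD (q r : rat) : 0 <= q -> 0 <= r -> f (q + r) = op (f q) (f r).
  move=> q_ge0 r_ge0; rewrite /f -phiD; congr phi; apply: val_inj.
  rewrite insubdK; last exact: addr_ge0.
  by rewrite /= (insubdK _ q_ge0) (insubdK _ r_ge0).
have f0 : f 0 = e by rewrite -phi0 /f; congr phi; apply: val_inj; rewrite insubdK.
exists [set b | (if b then f 1 else e) \in T] => x.
apply: (iff_trans (S_T x)); rewrite inE phi_f.
have [->|x_neq0] := eqVneq (sval x) 0; first by rewrite f0.
by rewrite (f_pos_const N_monoid f0 fD) // Qnn_gt0.
Qed.

Lemma sign_preim_recognizable (S : Qnn -> Prop) (T : {set bool}) :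
  (forall x, S x <-> (sval x != 0) \in T) -> recognizable Qnn_add Qnn0 S.
Proof.
move=> S_T; exists bool, orb, false, (fun x : Qnn => sval x != 0), T.
split; [|split; [|exact: S_T]].
- by split; [exact: orbA | split; [exact: orFb | exact: orbF]].
- split=> // -[x x_ge0] [y y_ge0].
  by rewrite /= paddr_eq0 // negb_and.
Qed.

Lemma set_bool_cases (T : {set bool}) :
  [\/ T = set0, T = [set false], T = [set true] | T = setT].
Proof.
case: (boolP (false \in T)) => F_T; case: (boolP (true \in T)) => T_T;
  [apply: Or44 | apply: Or42 | apply: Or43 | apply: Or41];
  by apply/setP => -[]; rewrite !inE ?F_T ?T_T ?(negbTE F_T) ?(negbTE T_T).
Qed.

Lemma Qnn_sign_in_set_bool (x : Qnn) :
  [/\ (sval x != 0) \in set0 <-> False,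
      (sval x != 0) \in [set false] <-> sval x = 0,
      (sval x != 0) \in [set true] <-> 0 < sval x
    & (sval x != 0) \in setT <-> True].
Proof.
rewrite !inE eqb_id Qnn_gt0 eqbF_neg negbK; split=> //.
exact: iff_sym (rwP eqP).
Qed.

Lemma sign_preim_cases (S : Qnn -> Prop) :
  (exists T : {set bool}, forall x, S x <-> (sval x != 0) \in T) <->
  [\/ (forall x : Qnn, S x <-> False),
      (forall x : Qnn, S x <-> proj1_sig x = 0),
      (forall x : Qnn, S x <-> 0 < proj1_sig x)
    | (forall x : Qnn, S x <-> True)].
Proof.
split=> [[T S_T]|].
  by case: (set_bool_cases T) S_T => -> S_T;
    [apply: Or41 | apply: Or42 | apply: Or43 | apply: Or44] => x;
    have [? ? ? ?] := Qnn_sign_in_set_bool x; apply: iff_trans (S_T x) _.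
by case=> S_P; [exists set0 | exists [set false] | exists [set true] | exists setT] => x;
  have [? ? ? ?] := Qnn_sign_in_set_bool x; apply: iff_trans (S_P x) (iff_sym _).
Qed.

Theorem mainTheorem3 (S : Qnn -> Prop) :
  recognizable Qnn_add Qnn0 S <->
  [\/ (forall x : Qnn, S x <-> False),
      (forall x : Qnn, S x <-> proj1_sig x = 0),
      (forall x : Qnn, S x <-> 0 < proj1_sig x)
    | (forall x : Qnn, S x <-> True)].
Proof.
apply: iff_trans (sign_preim_cases S); split; first exact: recognizable_sign_preim.
by case=> T; apply: sign_preim_recognizable.
Qed.
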